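(* Let $H$ be a digraph (possibly with loops) and let $D$ be an $H$-colored tournament. Then for every $k \geq 3$, $D$ has a $(k,H)$-kernel.
   Context: All digraphs are finite. A tournament is a digraph in which every two distinct vertices are joined by exactly one arc (no loops, no symmetric arcs). $D$ comes with a map $\rho: A(D)\to V(H)$. For a walk $W=(x_0,\ldots,x_n)$ in $D$, there is an obstruction on $x_i$ if $(\rho(x_{i-1},x_i),\rho(x_i,x_{i+1})) \notin A(H)$; for an open walk this is considered at internal vertices $x_i$, $1\le i\le n-1$, for a closed walk at all $i\in\{0,\ldots,n-1\}$ with indices modulo $n$. $O_H(W)$ is the set of indices with an obstruction; the $H$-length is $l_H(W)=|O_H(W)|+1$ for open $W$ and $|O_H(W)|$ for closed $W$. A $(k,H)$-kernel ($k\ge2$) is a set $S\subseteq V(D)$ such that for every two distinct $u,v\in S$ every directed $uv$-path in $D$ has $H$-length at least $k$, and for every $x\in V(D)\setminus S$ there is a directed path from $x$ to a vertex of $S$ of $H$-length at most $k-1$. *)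

From mathcomp Require Import all_boot.
Set Implicit Arguments. Unset Strict Implicit. Unset Printing Implicit Defensive.

Definition tournament (T : finType) (E : rel T) : Prop :=
  (forall x, ~~ E x x) /\
  (forall u v, E u v -> ~~ E v u) /\
  (forall u v, u != v -> E u v || E v u).

Definition dipath (T : finType) (E : rel T) (u v : T) (p : seq T) : bool :=
  [&& path E u p, uniq (u :: p) & last u p == v].

Definition arc_colors (T : finType) (HV : Type) (rho : T -> T -> HV)
  (u : T) (p : seq T) : seq HV := pairmap rho u p.

(* Number of obstructions of the open walk u :: p: internal vertices x_i with
   (rho(x_{i-1},x_i), rho(x_i,x_{i+1})) not an arc of H. *)
Definition obstructions (T : finType) (HV : finType) (hA : rel HV)
  (rho : T -> T -> HV) (u : T) (p : seq T) : nat :=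
  match arc_colors rho u p with
  | [::] => 0
  | c :: cs => count id (pairmap (fun a b => ~~ hA a b) c cs)
  end.

Definition Hlength (T : finType) (HV : finType) (hA : rel HV)
  (rho : T -> T -> HV) (u : T) (p : seq T) : nat :=
  (obstructions hA rho u p).+1.

Definition kH_kernel (T : finType) (E : rel T) (HV : finType) (hA : rel HV)
  (rho : T -> T -> HV) (k : nat) (S : {set T}) : Prop :=
  (forall u v, u \in S -> v \in S -> u != v ->
     forall p, dipath E u v p -> k <= Hlength hA rho u p) /\
  (forall x, x \notin S ->
     exists v p, [/\ v \in S, dipath E x v p & Hlength hA rho x p <= k - 1]).

From mathcomp Require Import all_boot.

(* A vertex of maximum in-degree in a tournament is reached from every other
   vertex by a directed path with at most two arcs (otherwise its
   in-neighbourhood would be strictly contained in that of some vertex), and a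
   path with at most two arcs has at most one obstruction.  So this vertex
   alone is a (k,H)-kernel as soon as k >= 3. *)

Set Implicit Arguments. Unset Strict Implicit. Unset Printing Implicit Defensive.

Section HLength.

Variables (T HV : finType) (hA : rel HV) (rho : T -> T -> HV).

Lemma obstructions_le_size (u : T) (p : seq T) :
  obstructions hA rho u p <= (size p).-1.
Proof.
case: p => [|y p] //; rewrite /obstructions /arc_colors /=.
by rewrite (leq_trans (count_size _ _)) // !size_pairmap.
Qed.

Lemma Hlength_le_size (u : T) (p : seq T) :
  p != [::] -> Hlength hA rho u p <= size p.
Proof. by case: p => // y p _; exact: (obstructions_le_size u (y :: p)). Qed.

End HLength.

Lemma set1_kH_kernel (T HV : finType) (E : rel T) (hA : rel HV)
    (rho : T -> T -> HV) (k : nat) (v : T) :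
  (forall x, x != v -> exists2 p, dipath E x v p & Hlength hA rho x p <= k - 1) ->
  kH_kernel E hA rho k [set v].
Proof.
move=> reach_v; split=> [u w|x]; rewrite !inE; first by move=> /eqP-> /eqP->; rewrite eqxx.
by move=> /reach_v[p pxv lenp]; exists v, p; rewrite inE.
Qed.

Section Tournament.

Variables (T : finType) (E : rel T).
Hypothesis tourE : tournament E.

Definition in_degree (v : T) : nat := #|[set y | E y v]|.

Lemma in_nbhd_proper (v x : T) :
  E v x -> (forall y, E y v -> ~~ E x y) ->
  [set y | E y v] \proper [set y | E y x].
Proof.
case: tourE => irrE [asymE totE] Evx noEx.
apply/properP; split; last by exists v; rewrite !inE ?Evx ?(negbTE (irrE v)).
apply/subsetP => y; rewrite !inE => Eyv.
have yx : y != x by apply: contraTneq Eyv => ->; exact: asymE.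
by have := totE y x yx; rewrite (negbTE (noEx y Eyv)) orbF.
Qed.

Lemma max_in_degree_two_step_dipath (v x : T) :
  (forall y, in_degree y <= in_degree v) -> x != v ->
  exists2 p, dipath E x v p & (0 < size p <= 2).
Proof.
case: tourE => irrE [_ totE] maxv xv.
have no_loop z : E z z = false by exact: negbTE (irrE z).
case Exv: (E x v).
  by exists [:: v]; rewrite // /dipath /= Exv eqxx inE xv.
have Evx : E v x by have := totE x v xv; rewrite Exv.
have [y /andP[Exy Eyv]] : exists y, E x y && E y v.
  apply/existsP; apply: contraT => /existsPn no_path2.
  have noEx z : E z v -> ~~ E x z by move=> Ezv; have := no_path2 z; rewrite Ezv andbT.
  by have := proper_card (in_nbhd_proper Evx noEx); rewrite ltnNge maxv.
exists [:: y; v] => //; rewrite /dipath /= Exy Eyv eqxx !inE (negbTE xv) !andbT.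
have yv : y != v by apply: contraTneq Eyv => ->; rewrite no_loop.
have xy : x != y by apply: contraTneq Exy => ->; rewrite no_loop.
by rewrite (negbTE xy) yv.
Qed.

End Tournament.

Theorem corollary8 (HV : finType) (hA : rel HV) (T : finType) (E : rel T)
  (rho : T -> T -> HV) :
  tournament E ->
  forall k : nat, 3 <= k -> exists S : {set T}, kH_kernel E hA rho k S.
Proof.
move=> tourE k k_ge3.
case: (pickP (fun _ : T => true)) => [v0 _ | T0]; last first.
  by exists set0; split=> [u|x]; rewrite ?inE //; have := T0 x.
have [v _ maxv] := arg_maxnP (in_degree E) (isT : predT v0).
exists [set v]; apply: set1_kH_kernel => x xv.
have [p pxv /andP[p_gt0 p_le2]] := max_in_degree_two_step_dipath tourE (maxv^~ isT) xv.
have p_nonnil : p != [::] by rewrite -size_eq0 -lt0n.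
have two_le_k1 : 2 <= k - 1 by rewrite subn1 -ltnS (ltn_predK k_ge3).
exists p => //; apply: leq_trans (Hlength_le_size hA rho x p_nonnil) _.
exact: leq_trans p_le2 two_le_k1.
Qed.
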